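(* Let $n\ge 3$ and let the sites $\{1,\dots,n\}$ of a qubit chain be partitioned into three nonempty consecutive intervals $L=\{1,\dots,a\}$, $C=\{a+1,\dots,a+k\}$, $R=\{a+k+1,\dots,n\}$. Let $W\in \mathrm{Sp}(2n,\mathbb{Z}_2)$ and write $\mathbb{Z}_2^{2n}=V_L\oplus V_C\oplus V_R$, vectors as $(l,c,r)$. Then the following are equivalent: (i) (wall to initial conditions) there exists a linear subspace $G\subseteq V_C$ such that for all integers $t\ge 0$ and all $u\in V_L$, $W^t(u,0,0)\in V_L\oplus G\oplus\{0\}$; (ii) (wall to input signals) there exists a linear subspace $G'\subseteq V_C$ such that for every finitely supported function $u:\mathbb{Z}_{\ge 0}\to V_L$, $\sum_{t\ge 0} W^t(u(t),0,0)\in V_L\oplus G'\oplus\{0\}$.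
   Context: Pauli operators on $n$ qubits modulo phases are identified with $\mathbb{Z}_2^{2n}$ via $(p_1,q_1,\dots,p_n,q_n)\mapsto X^{p_1}Z^{q_1}\otimes\cdots\otimes X^{p_n}Z^{q_n}$. The binary symplectic form is $J=\bigoplus_{i=1}^n \begin{pmatrix}0&1\\1&0\end{pmatrix}$, and $\mathrm{Sp}(2n,\mathbb{Z}_2)=\{S: SJS^T=J\}$; every Clifford unitary $U$ induces such a matrix $W$ with $UP_bU^\dagger\propto P_{Wb}$. For a set of sites $S$, $V_S\subseteq\mathbb{Z}_2^{2n}$ denotes the subspace of vectors whose coordinates $(p_i,q_i)$ vanish for all $i\notin S$. *)

(* Pauli vectors in Z_2^{2n} are column vectors 'cV['F_2]_(2*n);
   coordinate index i : 'I_(2*n) belongs to site (i./2)+1 (so 2(s-1) is p_s, 2(s-1)+1 is q_s). *)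
From HB Require Import structures.
From mathcomp Require Import all_boot all_order all_algebra.
Set Implicit Arguments. Unset Strict Implicit. Unset Printing Implicit Defensive.
Import GRing.Theory.
Local Open Scope ring_scope.

Notation pvec n := 'cV['F_2]_(2 * n).

Definition sympJ (n : nat) : 'M['F_2]_(2 * n) :=
  \matrix_(i, j) (((i : nat)./2 == (j : nat)./2) && (i != j))%:R.

Definition is_binsymplectic (n : nat) (W : 'M['F_2]_(2 * n)) : Prop :=
  W *m sympJ n *m W^T = sympJ n.

(* V_S for S a set of sites in {1..n}, given as a predicate on 1-based sites:
   v vanishes on every coordinate whose site is not in S *)
Definition in_VS (n : nat) (S : pred nat) (v : pvec n) : Prop :=
  forall i : 'I_(2 * n), ~~ S ((i : nat)./2).+1 -> v i 0 = 0.

Definition siteL (a : nat) : pred nat := fun s => (1 <= s <= a)%N.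
Definition siteC (a k : nat) : pred nat := fun s => (a + 1 <= s <= a + k)%N.
Definition siteR (n a k : nat) : pred nat := fun s => (a + k + 1 <= s <= n)%N.

Definition in_L_G_0 (n a : nat) (G : {vspace pvec n}) (v : pvec n) : Prop :=
  exists l g, in_VS (siteL a) l /\ g \in G /\ v = l + g.

(* Both conditions hold with the same subspace, G' = G, and for every linear W.  Since V_L (+) G
   is a subspace, it contains the sum of the responses W^t (u(t),0,0) as soon
   as it contains each of them; conversely, the impulse input equal to u at
   time t and to 0 elsewhere has total response W^t (u,0,0). *)
From HB Require Import structures.
From mathcomp Require Import all_boot all_order all_algebra.
Import GRing.Theory.
Local Open Scope ring_scope.

Lemma in_VS0 n (S : pred nat) : in_VS S (0 : pvec n).
Proof. by move=> i _; rewrite mxE. Qed.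

Lemma in_VSD n (S : pred nat) (v w : pvec n) :
  in_VS S v -> in_VS S w -> in_VS S (v + w).
Proof. by move=> Sv Sw i iNS; rewrite mxE Sv // Sw // addr0. Qed.

Section LGSubspace.

Variables (n a : nat) (G : {vspace pvec n}).

Lemma in_L_G_00 : in_L_G_0 a G 0.
Proof. by exists 0, 0; rewrite mem0v addr0; split; first exact: in_VS0. Qed.

Lemma in_L_G_0D v w : in_L_G_0 a G v -> in_L_G_0 a G w -> in_L_G_0 a G (v + w).
Proof.
move=> [l1 [g1 [Ll1 [Gg1 ->]]]] [l2 [g2 [Ll2 [Gg2 ->]]]].
exists (l1 + l2), (g1 + g2); split; first exact: in_VSD.
by rewrite memvD // addrACA.
Qed.

Lemma in_L_G_0_sum (I : Type) (r : seq I) (P : pred I) (F : I -> pvec n) :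
  (forall i, P i -> in_L_G_0 a G (F i)) ->
  in_L_G_0 a G (\sum_(i <- r | P i) F i).
Proof. by move=> LGF; elim/big_ind: _ => //; [exact: in_L_G_00 | exact: in_L_G_0D]. Qed.

End LGSubspace.

Lemma sum_impulse_response m (W : 'M['F_2]_m) (t : nat) (u : 'cV['F_2]_m) :
  \sum_(s < t.+1) W ^+ s *m (if s == t :> nat then u else 0) = W ^+ t *m u.
Proof.
rewrite big_ord_recr /= eqxx big1 ?add0r // => s _.
by rewrite ltn_eqF ?mulmx0.
Qed.

Theorem lemma2 (n a k : nat) (W : 'M['F_2]_(2 * n)) :
  (3 <= n)%N -> (0 < a)%N -> (0 < k)%N -> (a + k < n)%N ->
  is_binsymplectic W ->
  (exists G : {vspace pvec n},
      (forall g, g \in G -> in_VS (siteC a k) g) /\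
      (forall (t : nat) (u : pvec n), in_VS (siteL a) u ->
          in_L_G_0 a G (W ^+ t *m u)))
  <->
  (exists G' : {vspace pvec n},
      (forall g, g \in G' -> in_VS (siteC a k) g) /\
      (forall (u : nat -> pvec n) (N : nat),
          (forall t, in_VS (siteL a) (u t)) ->
          (forall t, (N <= t)%N -> u t = 0) ->
          in_L_G_0 a G' (\sum_(t < N) W ^+ t *m u t))).
Proof.
move=> _ _ _ _ _; split.
  move=> [G [GC wallG]]; exists G; split => // u N Lu _.
  by apply: in_L_G_0_sum => t _; apply: wallG.
move=> [G [GC wallG]]; exists G; split => // t u Lu.
rewrite -sum_impulse_response; apply: (wallG (fun s => if s == t then u else 0)) => s.
  by case: eqP => // _; apply: in_VS0.
by case: eqP => // ->; rewrite ltnn.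
Qed.
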